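(* Let $M$ be the monoid (algebra in sets) generated by $a,b,c,d,e,f,g,h,i,j,k,l$ subject to the relations $da=eb$, $fb=hc$, $gb=ic$, $kh=li$ and $je=kf=lg$. Then $M$ is basic-set, i.e. for all $u,v,x\in M$, $ux=vx$ implies $u=v$.
   Context: For an associative algebra viewed as an operad concentrated in arity $1$, the basic-set condition (injectivity of $\nu\mapsto\gamma(\nu;\nu_1)$) is right cancellativity of the underlying monoid. *)

(* The monoid M is presented as the free monoid on 12 letters
   (words = lists, product = concatenation, unit = empty word) modulo the
   congruence generated by the defining relations. *)
From Stdlib Require Import List Relations.
Import ListNotations.

Inductive gen : Type := ga | gb | gc | gd | ge | gf | gg | gh | gi | gj | gk | gl.

Definition word := list gen.

Inductive rel0 : word -> word -> Prop :=
  | r_da_eb : rel0 [gd; ga] [ge; gb]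
  | r_fb_hc : rel0 [gf; gb] [gh; gc]
  | r_gb_ic : rel0 [gg; gb] [gi; gc]
  | r_kh_li : rel0 [gk; gh] [gl; gi]
  | r_je_kf : rel0 [gj; ge] [gk; gf]
  | r_kf_lg : rel0 [gk; gf] [gl; gg].

Inductive step : word -> word -> Prop :=
  | step_ctx : forall p q l r, rel0 l r -> step (p ++ l ++ q) (p ++ r ++ q).

Definition Meq : word -> word -> Prop := clos_refl_sym_trans word step.

(* Orient the relations as eb -> da, hc -> fb, ic -> gb, li -> kh, kf -> je,
   lg -> je, read a word from left to right and reduce at the right end after
   each letter.  The letter-by-letter reduction [push] gives the same result on
   both sides of every relation, and for each letter t the map s |-> push s t
   has an explicit left inverse [pop t] (right division by t).  Neither fact
   needs the stack to be reduced, so the normal form of u x determines that of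
   u, and every word is equal in M to its normal form. *)
From Stdlib Require Import List Relations.
Import ListNotations.

Lemma Meq_app_l p a b : Meq a b -> Meq (p ++ a) (p ++ b).
Proof.
  induction 1 as [a b [p' q l r Hlr] | a | a b _ IH | a b c _ IHab _ IHbc].
  - apply rst_step; rewrite !(app_assoc p p'); exact (step_ctx _ q l r Hlr).
  - apply rst_refl.
  - exact (rst_sym _ _ _ _ IH).
  - exact (rst_trans _ _ _ _ _ IHab IHbc).
Qed.

Lemma Meq_app_r q a b : Meq a b -> Meq (a ++ q) (b ++ q).
Proof.
  induction 1 as [a b [p q' l r Hlr] | a | a b _ IH | a b c _ IHab _ IHbc].
  - apply rst_step; rewrite <- !app_assoc; exact (step_ctx p (q' ++ q) l r Hlr).
  - apply rst_refl.
  - exact (rst_sym _ _ _ _ IH).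
  - exact (rst_trans _ _ _ _ _ IHab IHbc).
Qed.

Lemma Meq_rel0 l r : rel0 l r -> Meq l r.
Proof.
  intros Hlr; pose proof (step_ctx [] [] l r Hlr) as Hstep.
  rewrite !app_nil_r in Hstep; exact (rst_step _ _ _ _ Hstep).
Qed.

Lemma fold_left_Meq {S : Type} (f : S -> gen -> S) :
  (forall l r s, rel0 l r -> fold_left f l s = fold_left f r s) ->
  forall a b s, Meq a b -> fold_left f a s = fold_left f b s.
Proof.
  intros Hrel a b s Hab; revert s.
  induction Hab as [a b [p q l r Hlr] | | |]; intros s; try congruence.
  rewrite !fold_left_app, (Hrel l r _ Hlr); reflexivity.
Qed.

Lemma fold_left_inj {A S : Type} (f : S -> A -> S) :
  (forall t s s', f s t = f s' t -> s = s') ->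
  forall w s s', fold_left f w s = fold_left f w s' -> s = s'.
Proof.
  intros Hinj w; induction w as [|t w IH]; intros s s' E; [exact E|].
  exact (Hinj t s s' (IH _ _ E)).
Qed.

(* Stacks hold words reversed, so reductions act at the head of the list. *)
Definition push (s : word) (t : gen) : word :=
  match t, s with
  | gb, ge :: r => ga :: gd :: r
  | gc, gh :: gk :: r => ga :: gd :: gj :: r  (* khc -> kfb -> jeb -> jda *)
  | gc, gh :: r => gb :: gf :: r
  | gc, gi :: r => gb :: gg :: r
  | gi, gl :: r => gh :: gk :: r
  | gf, gk :: r => ge :: gj :: r
  | gg, gl :: r => ge :: gj :: r
  | _, _ => t :: s
  end.

Definition pop (t : gen) (n : word) : word :=
  match t, n with
  | gb, ga :: gd :: r => ge :: r
  | gc, ga :: gd :: gj :: r => gh :: gk :: r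
  | gc, gb :: gf :: r => gh :: r
  | gc, gb :: gg :: r => gi :: r
  | gi, gh :: gk :: r => gl :: r
  | gf, ge :: gj :: r => gk :: r
  | gg, ge :: gj :: r => gl :: r
  | _, _ :: r => r
  | _, [] => []
  end.

Lemma pop_push s t : pop t (push s t) = s.
Proof.
  destruct t; try reflexivity;
    destruct s as [|x [|y r]]; try destruct x; try destruct y; reflexivity.
Qed.

Lemma push_inj t s s' : push s t = push s' t -> s = s'.
Proof. intros E; rewrite <- (pop_push s t), <- (pop_push s' t), E; reflexivity. Qed.

Lemma push_rel0 l r s : rel0 l r -> fold_left push l s = fold_left push r s.
Proof. destruct 1; destruct s as [|x s]; try destruct x; reflexivity. Qed.

Lemma Meq_rev_app l r s : Meq (rev l) (rev r) -> Meq (rev (l ++ s)) (rev (r ++ s)).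
Proof. rewrite !rev_app_distr; apply Meq_app_l. Qed.

Lemma jda_khc : Meq [gj; gd; ga] [gk; gh; gc].
Proof.
  apply rst_trans with [gj; ge; gb]; [exact (Meq_app_l [gj] _ _ (Meq_rel0 _ _ r_da_eb))|].
  apply rst_trans with [gk; gf; gb]; [exact (Meq_app_r [gb] _ _ (Meq_rel0 _ _ r_je_kf))|].
  exact (Meq_app_l [gk] _ _ (Meq_rel0 _ _ r_fb_hc)).
Qed.

Lemma push_Meq s t : Meq (rev (push s t)) (rev s ++ [t]).
Proof.
  change (rev s ++ [t]) with (rev (t :: s)).
  destruct t; try apply rst_refl; destruct s as [|x s]; try apply rst_refl;
    destruct x; try apply rst_refl.
  - exact (Meq_rev_app [ga; gd] [gb; ge] s (Meq_rel0 _ _ r_da_eb)).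
  - destruct s as [|y s]; [|destruct y];
      first [ exact (Meq_rev_app [ga; gd; gj] [gc; gh; gk] s jda_khc)
            | exact (Meq_rev_app [gb; gf] [gc; gh] _ (Meq_rel0 _ _ r_fb_hc)) ].
  - exact (Meq_rev_app [gb; gg] [gc; gi] s (Meq_rel0 _ _ r_gb_ic)).
  - exact (Meq_rev_app [ge; gj] [gf; gk] s (Meq_rel0 _ _ r_je_kf)).
  - apply (Meq_rev_app [ge; gj] [gg; gl] s), rst_trans with [gk; gf];
      apply Meq_rel0; constructor.
  - exact (Meq_rev_app [gh; gk] [gi; gl] s (Meq_rel0 _ _ r_kh_li)).
Qed.

Definition nf (w : word) : word := fold_left push w [].

Lemma Meq_nf w : Meq w (rev (nf w)).
Proof.
  induction w as [|t w IH] using rev_ind; [apply rst_refl|].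
  unfold nf; rewrite fold_left_app; cbn [fold_left].
  apply rst_trans with (rev (nf w) ++ [t]); [exact (Meq_app_r [t] _ _ IH)|].
  apply rst_sym, push_Meq.
Qed.

Theorem mainTheorem9 :
  forall u v x : word, Meq (u ++ x) (v ++ x) -> Meq u v.
Proof.
  intros u v x H.
  assert (E : nf u = nf v).
  { apply (fold_left_inj push push_inj x).
    unfold nf; rewrite <- !fold_left_app.
    exact (fold_left_Meq push push_rel0 _ _ [] H). }
  apply rst_trans with (rev (nf u)); [apply Meq_nf|].
  rewrite E; apply rst_sym, Meq_nf.
Qed.
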